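(* For $k=1,2$ let $\mathcal{N}_k:\mathcal{L}(\mathcal{H}_{A_k})\to\mathcal{L}(\mathcal{H}_{B_k})$ be a quantum channel with $\dim\mathcal{H}_{A_k}=\dim\mathcal{H}_{B_k}=d_k$. For a channel $\mathcal{N}:\mathcal{L}(\mathcal{H}_A)\to\mathcal{L}(\mathcal{H}_B)$ with $\dim\mathcal{H}_A=\dim\mathcal{H}_B=d$, define $$\mathcal{O}(\mathcal{N})=\max_{\rho_{RA}}F\big((\mathcal{I}_R\otimes\mathcal{N})(\rho_{RA}),\phi_{RB}\big),$$ where $\mathcal{H}_R$ is a $d$-dimensional reference space, the maximum is over all density operators $\rho_{RA}$ on $\mathcal{H}_R\otimes\mathcal{H}_A$, $\phi_{RB}$ is the projector onto the maximally entangled state $\frac1{\sqrt d}\sum_j|j\rangle_R|j\rangle_B$ (fixed orthonormal bases), and $F(\rho,\sigma)=\|\sqrt\rho\sqrt\sigma\|_1$. Then, with $\mathcal{N}_1\otimes\mathcal{N}_2:\mathcal{L}(\mathcal{H}_{A_1}\otimes\mathcal{H}_{A_2})\to\mathcal{L}(\mathcal{H}_{B_1}\otimes\mathcal{H}_{B_2})$ (of input/output dimension $d_1d_2$), $$\mathcal{O}(\mathcal{N}_1\otimes\mathcal{N}_2)=\mathcal{O}(\mathcal{N}_1)\,\mathcal{O}(\mathcal{N}_2).$$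
   Context: $\mathcal{I}_R$ is the identity map on $\mathcal{L}(\mathcal{H}_R)$ and $\|\cdot\|_1$ is the trace norm. For the tensor product channel the reference space is $\mathcal{H}_{R_1}\otimes\mathcal{H}_{R_2}$ and the maximally entangled state is the one across $R_1R_2$ and $B_1B_2$. *)

From HB Require Import structures.
From mathcomp Require Import all_boot all_order all_algebra.
From mathcomp Require Import complex mxtens.
From mathcomp Require Import boolp classical_sets reals.
Set Implicit Arguments. Unset Strict Implicit. Unset Printing Implicit Defensive.
Import Order.TTheory GRing.Theory Num.Theory.
Local Open Scope ring_scope.

Section QDefs.
Variable R : realType.
Local Notation C := (R[i]).

Definition adjmx {m n} (A : 'M[C]_(m, n)) : 'M[C]_(n, m) := map_mx Num.conj A^T.

Definition hermitian {n} (A : 'M[C]_n) : Prop := adjmx A = A.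

Definition psd {n} (A : 'M[C]_n) : Prop :=
  hermitian A /\ forall v : 'cV[C]_n, 0 <= (adjmx v *m A *m v) 0 0.

Definition density {n} (rho : 'M[C]_n) : Prop := psd rho /\ \tr rho = 1.

Definition sqrtm {n} (A : 'M[C]_n) : 'M[C]_n :=
  xget 0 [set B | psd B /\ B *m B = A].

Definition trnorm {n} (X : 'M[C]_n) : R := complex.Re (\tr (sqrtm (adjmx X *m X))).

Definition fidelity {n} (rho sigma : 'M[C]_n) : R := trnorm (sqrtm rho *m sqrtm sigma).

(* tensor product f (x) g of linear maps on matrices, defined by linear extension
   on matrix units: (f (x) g)(X) = sum X_{(i,k),(j,l)} f(E_ij) (x) g(E_kl) *)
Definition tens_map {m1 n1 m2 n2}
  (f : 'M[C]_m1 -> 'M[C]_n1) (g : 'M[C]_m2 -> 'M[C]_n2) (X : 'M[C]_(m1 * m2))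
  : 'M[C]_(n1 * n2) :=
  \sum_(i < m1) \sum_(j < m1) \sum_(k < m2) \sum_(l < m2)
     X (mxtens_index (i, k)) (mxtens_index (j, l)) *:
       (f (delta_mx i j) *t g (delta_mx k l)).

Definition completely_positive {m n} (f : 'M[C]_m -> 'M[C]_n) : Prop :=
  forall (k : nat) (X : 'M[C]_(k * m)), psd X -> psd (tens_map (@id 'M[C]_k) f X).

Definition trace_preserving {m n} (f : 'M[C]_m -> 'M[C]_n) : Prop :=
  forall X, \tr (f X) = \tr X.

Definition channel {m n} (f : 'M[C]_m -> 'M[C]_n) : Prop :=
  linear f /\ completely_positive f /\ trace_preserving f.

(* maximally entangled vector (1/sqrt d) sum_j |j>_R |j>_B, written as
   unnormalised vector; phi_me d is the projector onto the normalised state *)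
Definition me_vec (d : nat) : 'cV[C]_(d * d) :=
  \col_x (\sum_(j < d) ((x == mxtens_index (j, j)) %:R : C)).

Definition phi_me (d : nat) : 'M[C]_(d * d) :=
  (d%:R)^-1 *: (me_vec d *m adjmx (me_vec d)).

Definition Oval (d : nat) (N : 'M[C]_d -> 'M[C]_d) : R :=
  sup [set r : R | exists rho : 'M[C]_(d * d),
         density rho /\ r = fidelity (tens_map (@id 'M[C]_d) N rho) (phi_me d)].

End QDefs.

From Pilot Require Import Defs.
From HB Require Import structures.
From mathcomp Require Import all_boot all_order all_algebra.
From mathcomp Require Import complex mxtens.
From mathcomp Require Import boolp classical_sets reals.
From mathcomp Require Import spectral.
From mathcomp Require Import ring.
Import Order.TTheory GRing.Theory Num.Theory.
Local Open Scope ring_scope.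
Set Implicit Arguments. Unset Strict Implicit. Unset Printing Implicit Defensive.

(* Write [phi] for the normalised maximally entangled vector.  As [|phi><phi|] is a rank-one
   projector, F(sigma, |phi><phi|) = sqrt <phi|sigma|phi>, and <phi|(I (x) N)(rho)|phi> equals
   tr (rho J_N) for a rescaled, reshuffled Choi matrix J_N, which is positive semidefinite when N
   is completely positive.  Hence O(N)^2 is the largest value of tr (rho J_N) over density
   matrices, i.e. the largest eigenvalue of J_N.  Up to a permutation of the basis,
   J_(N1 (x) N2) is the Kronecker product of J_N1 and J_N2, whose eigenvalues are the products of
   their (nonnegative) eigenvalues, so its largest eigenvalue is the product of theirs. *)

Section Adjoint.
Variable R : realType.
Local Notation C := R[i].

Lemma adjmxE m n (A : 'M[C]_(m, n)) i j : adjmx A i j = (A j i)^*.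
Proof. by rewrite !mxE. Qed.

Lemma adjmxK m n (A : 'M[C]_(m, n)) : adjmx (adjmx A) = A.
Proof. by apply/matrixP=> i j; rewrite !mxE conjCK. Qed.

Lemma adjmxM m n p (A : 'M[C]_(m, n)) (B : 'M[C]_(n, p)) :
  adjmx (A *m B) = adjmx B *m adjmx A.
Proof. by rewrite /adjmx trmx_mul map_mxM. Qed.

Lemma adjmxD m n (A B : 'M[C]_(m, n)) : adjmx (A + B) = adjmx A + adjmx B.
Proof. by apply/matrixP=> i j; rewrite !mxE rmorphD. Qed.

Lemma adjmxB m n (A B : 'M[C]_(m, n)) : adjmx (A - B) = adjmx A - adjmx B.
Proof. by apply/matrixP=> i j; rewrite !mxE rmorphB. Qed.

Lemma adjmxZ m n (a : C) (A : 'M[C]_(m, n)) : adjmx (a *: A) = a^* *: adjmx A.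
Proof. by apply/matrixP=> i j; rewrite !mxE rmorphM. Qed.

Lemma adjmx_diag n (d : 'rV[C]_n) : adjmx (diag_mx d) = diag_mx (map_mx Num.conj d).
Proof.
apply/matrixP=> i j; rewrite !mxE eq_sym.
by case: (eqVneq i j) => [->|_]; rewrite ?mulr1n ?mulr0n ?conjC0.
Qed.

Lemma adjmx_tens m n p q (A : 'M[C]_(m, n)) (B : 'M[C]_(p, q)) :
  adjmx (A *t B) = adjmx A *t adjmx B.
Proof. by rewrite /adjmx trmx_tens map_mxT. Qed.

Lemma adjmx_mul_self_ge0 n (v : 'cV[C]_n) : 0 <= (adjmx v *m v) 0 0.
Proof.
rewrite mxE; apply: sumr_ge0 => k _; rewrite !mxE mulrC; exact: mul_conjC_ge0.
Qed.

Lemma adjmx_mul_self_eq0 m n (X : 'M[C]_(m, n)) : adjmx X *m X = 0 -> X = 0.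
Proof.
move=> XX0; apply/matrixP=> i j; rewrite mxE.
have /matrixP/(_ j j) := XX0; rewrite !mxE => sum0.
have ge0 k : predT k -> 0 <= adjmx X j k * X k j.
  by move=> _; rewrite !mxE mulrC; exact: mul_conjC_ge0.
have /eqP := @psumr_eq0P _ _ predT _ ge0 sum0 i isT.
by rewrite !mxE mulrC mul_conjC_eq0 => /eqP.
Qed.

End Adjoint.

Section Psd.
Variable R : realType.
Local Notation C := R[i].

Lemma quad_col n (A W : 'M[C]_n) i :
  (adjmx (col i W) *m A *m col i W) 0 0 = (adjmx W *m A *m W) i i.
Proof.
rewrite !mxE; apply: eq_bigr => k _; rewrite !mxE; congr (_ * _).
by apply: eq_bigr => l _; rewrite !mxE.
Qed.

Lemma psd_adj_conj m n (P : 'M[C]_(m, n)) (X : 'M[C]_m) :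
  psd X -> psd (adjmx P *m X *m P).
Proof.
move=> [hX qX]; split; first by rewrite /Defs.hermitian !adjmxM adjmxK hX mulmxA.
move=> v; have -> : adjmx v *m (adjmx P *m X *m P) *m v = adjmx (P *m v) *m X *m (P *m v).
  by rewrite adjmxM !mulmxA.
exact: qX.
Qed.

Lemma psd_outer n (c : 'cV[C]_n) : psd (c *m adjmx c).
Proof.
split; first by rewrite /Defs.hermitian adjmxM adjmxK.
move=> v; have -> : adjmx v *m (c *m adjmx c) *m v = adjmx (adjmx c *m v) *m (adjmx c *m v).
  by rewrite adjmxM adjmxK !mulmxA.
exact: adjmx_mul_self_ge0.
Qed.

Lemma psd_diag n (d : 'rV[C]_n) : (forall i, 0 <= d 0 i) -> psd (diag_mx d).
Proof.
move=> d_ge0; split.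
  rewrite /Defs.hermitian adjmx_diag; congr diag_mx.
  by apply/matrixP=> i j; rewrite mxE (ord1 i) geC0_conj.
move=> v; rewrite mul_mx_diag mxE; apply: sumr_ge0 => k _; rewrite !mxE.
by rewrite mulrAC; apply: mulr_ge0 => //; rewrite mulrC; exact: mul_conjC_ge0.
Qed.

Lemma psd_spectral n (A : 'M[C]_n) : psd A ->
  exists (W : 'M[C]_n) (d : 'rV[C]_n), [/\ adjmx W *m W = 1%:M, W *m adjmx W = 1%:M,
    A = W *m diag_mx d *m adjmx W & forall i, 0 <= d 0 i].
Proof.
move=> [hA qA].
have /orthomx_spectralP : A \is normalmx by apply/normalmxP; rewrite [map_mx _ _]hA.
rewrite invmx_unitary ?spectral_unitarymx //.
set P := spectralmx A; set D := spectral_diag A => AE.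
have PP : P *m adjmx P = 1%:M by apply/unitarymxP; exact: spectral_unitarymx.
exists (adjmx P), D; rewrite adjmxK; split => //; first exact: mulmx1C.
move=> i; have := qA (col i (adjmx P)); rewrite quad_col adjmxK.
have -> : P *m A *m adjmx P = diag_mx D.
  by rewrite [A]AE -/(adjmx P) !mulmxA PP mul1mx -mulmxA PP mulmx1.
by rewrite mxE eqxx mulr1n.
Qed.

End Psd.

Section SquareRoot.
Variable R : realType.
Local Notation C := R[i].

Lemma sqrtm_spec n (A : 'M[C]_n) : psd A -> psd (sqrtm A) /\ sqrtm A *m sqrtm A = A.
Proof.
move=> /psd_spectral[W [d [WW _ AE d_ge0]]].
apply: (@xgetPex _ 0 [set B | psd B /\ B *m B = A]).
exists (W *m diag_mx (map_mx sqrtC d) *m adjmx W); split.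
  rewrite -{1}[W]adjmxK; apply: psd_adj_conj; apply: psd_diag => i.
  by rewrite mxE sqrtC_ge0.
rewrite AE !mulmxA -(mulmxA _ (adjmx W) W) WW mulmx1 -(mulmxA W) mulmx_diag.
congr (_ *m diag_mx _ *m _).
by apply/matrixP => i j; rewrite !mxE (ord1 i) -expr2 sqrtCK.
Qed.

Variables (n : nat) (u : 'cV[C]_n).
Hypothesis u_unit : adjmx u *m u = 1%:M.
Local Notation P := (u *m adjmx u).

Lemma outer_sandwich (M : 'M[C]_n) : P *m M *m P = (adjmx u *m M *m u) 0 0 *: P.
Proof.
have -> : P *m M *m P = u *m (adjmx u *m M *m u) *m adjmx u by rewrite !mulmxA.
by rewrite {1}(mx11_scalar (adjmx u *m M *m u)) mul_mx_scalar scalemxAl.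
Qed.

Lemma outer_idem : P *m P = P.
Proof. by rewrite mulmxA -(mulmxA u) u_unit mulmx1. Qed.

Lemma adjmx_outer : adjmx P = P.
Proof. by rewrite adjmxM adjmxK. Qed.

Lemma outer_neq0 : P != 0.
Proof.
apply/eqP => P0; have : adjmx u *m P *m u = 1%:M by rewrite mulmxA u_unit mul1mx u_unit.
rewrite P0 mulmx0 mul0mx => /matrixP/(_ 0 0); rewrite !mxE => /esym/eqP.
by rewrite oner_eq0.
Qed.

(* [B] commutes with [B * B = r P], hence [B = P B P], a multiple of [P]. *)
Lemma psd_sqrt_outer_uniq (r : C) (B : 'M[C]_n) :
  r != 0 -> psd B -> B *m B = r *: P -> B = sqrtC r *: P.
Proof.
move=> r_neq0 [hB qB] BB.
have comm : B *m P = P *m B.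
  have : B *m (B *m B) = (B *m B) *m B by rewrite mulmxA.
  by rewrite BB -scalemxAr -scalemxAl => /(scalerI r_neq0).
have BP : B = B *m P.
  apply/eqP; rewrite -subr_eq0; apply/eqP; apply: adjmx_mul_self_eq0.
  have e1 : B *m (B *m P) = r *: P by rewrite mulmxA BB -scalemxAl outer_idem.
  have e2 : B *m P *m B = r *: P by rewrite -mulmxA -comm e1.
  have e3 : B *m P *m (B *m P) = r *: P by rewrite mulmxA e2 -scalemxAl outer_idem.
  rewrite adjmxB adjmxM hB adjmx_outer -comm mulmxBl !mulmxBr BB e1 e2 e3.
  by rewrite !subrr.
set l := (adjmx u *m B *m u) 0 0.
have BL : B = l *: P by rewrite -outer_sandwich -comm -mulmxA outer_idem -BP.
have : B *m B = (l ^+ 2) *: P.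
  by rewrite {1 2}BL -scalemxAl -scalemxAr outer_idem scalerA expr2.
rewrite BB => /eqP; rewrite -subr_eq0 -scalerBl scaler_eq0 (negPf outer_neq0) orbF.
by rewrite subr_eq0 => /eqP ->; rewrite sqrCK; [exact: BL | exact: qB].
Qed.

Lemma sqrtm_outer (r : C) : 0 <= r -> sqrtm (r *: P) = sqrtC r *: P.
Proof.
move=> r_ge0; apply: xget_unique.
  split; last by rewrite -scalemxAl -scalemxAr outer_idem scalerA -expr2 sqrtCK.
  split; first by rewrite /Defs.hermitian adjmxZ adjmx_outer geC0_conj // sqrtC_ge0.
  move=> v; rewrite -scalemxAr -scalemxAl mxE; apply: mulr_ge0; first by rewrite sqrtC_ge0.
  exact: (psd_outer u).2.
move=> B [pB BB]; have [r0|r_neq0] := eqVneq r 0; last exact: psd_sqrt_outer_uniq.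
rewrite r0 sqrtC0 scale0r; apply: adjmx_mul_self_eq0.
by rewrite pB.1 BB r0 scale0r.
Qed.

Lemma fidelity_outer (s : 'M[C]_n) : psd s ->
  fidelity s P = complex.Re (sqrtC ((adjmx u *m s *m u) 0 0)).
Proof.
move=> ps; have [[hS qS] SS] := sqrtm_spec ps.
have sP : sqrtm P = P by have := sqrtm_outer ler01; rewrite sqrtC1 !scale1r.
rewrite /fidelity /trnorm sP.
have -> : adjmx (sqrtm s *m P) *m (sqrtm s *m P) = (adjmx u *m s *m u) 0 0 *: P.
  by rewrite adjmxM hS adjmx_outer -mulmxA (mulmxA (sqrtm s)) SS mulmxA outer_sandwich.
rewrite sqrtm_outer; last exact: ps.2.
by rewrite mxtraceZ mxtrace_mulC u_unit mxtrace1 mulr1.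
Qed.

End SquareRoot.

Section Sums.
Variable S : pzSemiRingType.

Lemma sum_nat_eq_mull (T : finType) (F : T -> S) a :
  \sum_i ((a == i)%:R * F i) = F a.
Proof.
rewrite (bigD1 a) //= eqxx mul1r big1 ?addr0 // => i /negPf.
by rewrite eq_sym => ->; rewrite mul0r.
Qed.

Lemma sum_nat_eq_mulr (T : finType) (F : T -> S) a :
  \sum_i ((i == a)%:R * F i) = F a.
Proof. by under eq_bigr do rewrite eq_sym; rewrite sum_nat_eq_mull. Qed.

Lemma sum_mxtens_index m n (F : 'I_(m * n) -> S) :
  \sum_x F x = \sum_(i < m) \sum_(j < n) F (mxtens_index (i, j)).
Proof.
rewrite pair_big /= (reindex (@mxtens_index m n)) /=; last first.
  by exists (@mxtens_unindex m n) => x _; rewrite (mxtens_indexK, mxtens_unindexK).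
by apply: eq_bigr => -[i j].
Qed.

End Sums.

Section MaxEntangled.
Variable R : realType.
Local Notation C := R[i].

Lemma me_vecE d x : me_vec R d x 0 = \sum_(j < d) ((x == mxtens_index (j, j))%:R : C).
Proof. by rewrite mxE. Qed.

Lemma sum_mul_me_vec d (F : 'I_(d * d) -> C) :
  \sum_x F x * me_vec R d x 0 = \sum_j F (mxtens_index (j, j)).
Proof.
under eq_bigr do rewrite me_vecE mulr_sumr.
rewrite exchange_big /=; apply: eq_bigr => j _.
by under eq_bigr do rewrite mulrC; rewrite sum_nat_eq_mulr.
Qed.

Lemma conj_me_vec d x : (me_vec R d x 0)^* = me_vec R d x 0.
Proof. by rewrite me_vecE rmorph_sum; apply: eq_bigr => j _; rewrite rmorph_nat. Qed.

Lemma me_vec_quad d (s : 'M[C]_(d * d)) :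
  (adjmx (me_vec R d) *m s *m me_vec R d) 0 0 =
  \sum_a \sum_b s (mxtens_index (a, a)) (mxtens_index (b, b)).
Proof.
rewrite mxE sum_mul_me_vec [RHS]exchange_big /=; apply: eq_bigr => b _; rewrite mxE.
transitivity (\sum_j s j (mxtens_index (b, b)) * me_vec R d j 0).
  by apply: eq_bigr => j _; rewrite adjmxE conj_me_vec mulrC.
by rewrite sum_mul_me_vec.
Qed.

Lemma me_vec_norm d : (adjmx (me_vec R d) *m me_vec R d) 0 0 = d%:R.
Proof.
have := me_vec_quad (1%:M : 'M[C]_(d * d)); rewrite mulmx1 => ->.
under eq_bigr => a _ do under eq_bigr => b _ do
  rewrite mxE (can_eq (@mxtens_indexK _ _)) xpair_eqE andbb.
rewrite (eq_bigr (fun=> 1)) ?sumr_const ?card_ord // => a _.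
by rewrite (eq_bigr (fun b => (a == b)%:R * 1)) ?sum_nat_eq_mull // => b _; rewrite mulr1.
Qed.

Definition me_unit d : 'cV[C]_(d * d) := (sqrtC d%:R)^-1 *: me_vec R d.

Lemma adjmx_quadZ n (c : C) (v : 'cV[C]_n) (M : 'M[C]_n) :
  adjmx (c *: v) *m M *m (c *: v) = (c^* * c) *: (adjmx v *m M *m v).
Proof. by rewrite adjmxZ -!scalemxAl -scalemxAr scalerA. Qed.

Lemma me_unit_coef d : ((sqrtC d%:R)^-1)^* * (sqrtC d%:R)^-1 = d%:R^-1 :> C.
Proof.
rewrite geC0_conj; last by rewrite invr_ge0 sqrtC_ge0 ler0n.
by rewrite -expr2 exprVn sqrtCK.
Qed.

Lemma me_unit_norm d : (0 < d)%N -> adjmx (me_unit d) *m me_unit d = 1%:M.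
Proof.
move=> d_gt0; rewrite -(mulmx1 (adjmx (me_unit d))) /me_unit adjmx_quadZ me_unit_coef mulmx1.
rewrite (mx11_scalar (adjmx _ *m _)) me_vec_norm -scalemx1 scalerA mulVf ?scale1r //.
by rewrite pnatr_eq0 -lt0n.
Qed.

Lemma me_unit_outer d : me_unit d *m adjmx (me_unit d) = phi_me R d.
Proof. by rewrite /me_unit adjmxZ -scalemxAl -scalemxAr scalerA mulrC me_unit_coef. Qed.

End MaxEntangled.

Section ChoiMatrix.
Variable R : realType.
Local Notation C := R[i].

Lemma tens_mapE m1 n1 m2 n2 (f : 'M[C]_m1 -> 'M[C]_n1) (g : 'M[C]_m2 -> 'M[C]_n2)
  (X : 'M[C]_(m1 * m2)) p1 p2 q1 q2 :
  tens_map f g X (mxtens_index (p1, p2)) (mxtens_index (q1, q2)) =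
  \sum_i \sum_j \sum_k \sum_l (X (mxtens_index (i, k)) (mxtens_index (j, l)) *
      (f (delta_mx i j) p1 q1 * g (delta_mx k l) p2 q2)).
Proof.
rewrite /tens_map summxE; apply: eq_bigr => i _; rewrite summxE; apply: eq_bigr => j _.
rewrite summxE; apply: eq_bigr => k _; rewrite summxE; apply: eq_bigr => l _.
by rewrite mxE tensmxE.
Qed.

Lemma tens_map_idE d m (g : 'M[C]_m -> 'M[C]_m) (X : 'M[C]_(d * m)) p1 p2 q1 q2 :
  tens_map (@id 'M[C]_d) g X (mxtens_index (p1, p2)) (mxtens_index (q1, q2)) =
  \sum_k \sum_l (X (mxtens_index (p1, k)) (mxtens_index (q1, l)) * g (delta_mx k l) p2 q2).
Proof.
rewrite tens_mapE.
transitivity (\sum_i ((p1 == i)%:R * \sum_j ((q1 == j)%:R *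
   \sum_k \sum_l (X (mxtens_index (i, k)) (mxtens_index (j, l)) * g (delta_mx k l) p2 q2)))).
  apply: eq_bigr => i _; rewrite [RHS]mulr_sumr; apply: eq_bigr => j _.
  rewrite !mulr_sumr; apply: eq_bigr => k _; rewrite !mulr_sumr; apply: eq_bigr => l _.
  by rewrite mxE -mulnb natrM /=; ring.
by rewrite !sum_nat_eq_mull.
Qed.

(* The transpose of the Choi matrix [(I (x) N)(sum_kl E_kl (x) E_kl)] of [N], divided by [d]
   and with its two tensor factors swapped: the matrix J_N of the proof idea. *)
Definition choi_mx d (N : 'M[C]_d -> 'M[C]_d) : 'M[C]_(d * d) :=
  \matrix_(y, x) (N (delta_mx (mxtens_unindex x).2 (mxtens_unindex y).2)
                     (mxtens_unindex x).1 (mxtens_unindex y).1 / d%:R).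

Lemma choi_mxE d (N : 'M[C]_d -> 'M[C]_d) b l a k :
  choi_mx N (mxtens_index (b, l)) (mxtens_index (a, k)) = N (delta_mx k l) a b / d%:R.
Proof. by rewrite mxE !mxtens_indexK. Qed.

Lemma me_unit_overlap d (N : 'M[C]_d -> 'M[C]_d) (rho : 'M[C]_(d * d)) :
  (adjmx (me_unit R d) *m tens_map (@id 'M[C]_d) N rho *m me_unit R d) 0 0 =
  \tr (rho *m choi_mx N).
Proof.
rewrite /me_unit adjmx_quadZ mxE me_unit_coef me_vec_quad /mxtrace.
rewrite sum_mxtens_index mulr_sumr; apply: eq_bigr => a _.
rewrite mulr_sumr.
transitivity (\sum_b \sum_k \sum_l (d%:R^-1 *
   (rho (mxtens_index (a, k)) (mxtens_index (b, l)) * N (delta_mx k l) a b))).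
  apply: eq_bigr => b _; rewrite tens_map_idE mulr_sumr; apply: eq_bigr => k _.
  by rewrite mulr_sumr.
rewrite exchange_big /=; apply: eq_bigr => k _.
rewrite mxE sum_mxtens_index; apply: eq_bigr => b _; apply: eq_bigr => l _.
by rewrite choi_mxE; ring.
Qed.

End ChoiMatrix.

Section Polarization.
Variable R : realType.
Local Notation C := R[i].

Lemma quad_delta n (K : 'M[C]_n) (i j : 'I_n) :
  (adjmx (delta_mx i 0 : 'cV[C]_n) *m K *m (delta_mx j 0 : 'cV[C]_n)) 0 0 = K i j.
Proof.
have -> : adjmx (delta_mx i 0 : 'cV[C]_n) = delta_mx 0 i.
  by apply/matrixP => p q; rewrite adjmxE !mxE rmorph_nat andbC.
by rewrite -rowE -colE !mxE.
Qed.

Lemma quad_tr n (M : 'M[C]_n) (v : 'cV[C]_n) :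
  (adjmx v *m M *m v) 0 0 = \tr (v *m adjmx v *m M).
Proof. by rewrite -[in RHS]mulmxA [RHS]mxtrace_mulC trace_mx11. Qed.

Lemma quad_eq0_mx0 n (K : 'M[C]_n) :
  (forall v : 'cV[C]_n, (adjmx v *m K *m v) 0 0 = 0) -> K = 0.
Proof.
move=> K0.
have entryD (A B : 'M[C]_1) : (A + B) 0 0 = A 0 0 + B 0 0 by rewrite mxE.
have entryZ c (A : 'M[C]_1) : (c *: A) 0 0 = c * A 0 0 by rewrite mxE.
have polar i j c : c * K i j + c^* * K j i = 0.
  have := K0 (delta_mx i 0 + c *: (delta_mx j 0 : 'cV[C]_n)).
  rewrite adjmxD adjmxZ !mulmxDl !mulmxDr -!scalemxAl -!scalemxAr !entryD !entryZ !quad_delta.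
  have := K0 (delta_mx i 0); have := K0 (delta_mx j 0).
  rewrite !quad_delta => -> ->.
  by rewrite !mulr0 add0r addr0.
apply/matrixP => i j; rewrite mxE.
have := polar i j 1; have := polar i j 'i.
rewrite conjC1 !mul1r conjCi mulNr => /eqP; rewrite subr_eq0 => /eqP Kij.
have -> : K j i = K i j by apply: (mulfI (@neq0Ci C)).
by move=> /eqP; rewrite -mulr2n -mulr_natr mulf_eq0 pnatr_eq0 orbF => /eqP.
Qed.

Lemma quad_ge0_hermitian n (M : 'M[C]_n) :
  (forall v : 'cV[C]_n, 0 <= (adjmx v *m M *m v) 0 0) -> adjmx M = M.
Proof.
move=> M_ge0; apply/eqP; rewrite -subr_eq0; apply/eqP; apply: quad_eq0_mx0 => v.
rewrite mulmxBr mulmxBl.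
have -> : adjmx v *m adjmx M *m v = adjmx (adjmx v *m M *m v).
  by rewrite !adjmxM adjmxK mulmxA.
have -> : adjmx (adjmx v *m M *m v) = adjmx v *m M *m v.
  by apply/matrixP => i j; rewrite !ord1 adjmxE geC0_conj.
by rewrite subrr mxE.
Qed.

End Polarization.

Section MaxExpectation.
Variable R : realType.
Local Notation C := R[i].

(* For Hermitian [M], this says that [l] is the largest eigenvalue of [M]. *)
Definition max_expectation n (M : 'M[C]_n) (l : C) : Prop :=
  (exists2 rho, density rho & \tr (rho *m M) = l) /\
  (forall rho, density rho -> \tr (rho *m M) <= l).

Lemma max_expectation_uniq n (M : 'M[C]_n) l1 l2 :
  max_expectation M l1 -> max_expectation M l2 -> l1 = l2.
Proof.
move=> [[rho1 d1 <-] le1] [[rho2 d2 <-] le2].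
by apply/le_anti/andP; split; [exact: le2 | exact: le1].
Qed.

Lemma max_expectation_dim_gt0 n (M : 'M[C]_n) l : max_expectation M l -> (0 < n)%N.
Proof.
case: n M => // M [[rho [_ tr1] _] _]; move: tr1.
by rewrite /mxtrace big_ord0 => /eqP; rewrite eq_sym oner_eq0.
Qed.

Lemma density_adj_conj m n (P : 'M[C]_(m, n)) (rho : 'M[C]_m) :
  P *m adjmx P = 1%:M -> density rho -> density (adjmx P *m rho *m P).
Proof.
move=> PP [prho tr1]; split; first exact: psd_adj_conj.
by rewrite mxtrace_mulC mulmxA PP mul1mx.
Qed.

Lemma max_expectation_adj_conj m n (U : 'M[C]_(m, n)) (M : 'M[C]_m) l :
  adjmx U *m U = 1%:M -> U *m adjmx U = 1%:M ->
  max_expectation M l -> max_expectation (adjmx U *m M *m U) l.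
Proof.
move=> UU UU' [[rho0 d0 tr0] le_l].
have tr_conj rho : \tr (rho *m (adjmx U *m M *m U)) = \tr (U *m rho *m adjmx U *m M).
  by rewrite !mulmxA mxtrace_mulC !mulmxA.
split.
  exists (adjmx U *m rho0 *m U); first exact: density_adj_conj.
  by rewrite tr_conj !mulmxA UU' mul1mx -(mulmxA rho0) UU' mulmx1.
move=> rho drho; rewrite tr_conj; apply: le_l.
by rewrite -{1}[U]adjmxK; apply: density_adj_conj; rewrite ?adjmxK.
Qed.

Lemma max_expectation_diag n (d : 'rV[C]_n) i0 :
  (forall i, d 0 i <= d 0 i0) -> max_expectation (diag_mx d) (d 0 i0).
Proof.
move=> d_max; pose e i : 'cV[C]_n := delta_mx i 0.
split.
  exists (e i0 *m adjmx (e i0)).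
    split; first exact: psd_outer.
    by rewrite -[_ *m _]mulmx1 -quad_tr quad_delta mxE eqxx.
  by rewrite -quad_tr quad_delta mxE eqxx mulr1n.
move=> rho [[_ rho_ge0] tr1].
rewrite mul_mx_diag /mxtrace (eq_bigr (fun i => rho i i * d 0 i)) => [|i _]; last first.
  by rewrite mxE.
apply: (@le_trans _ _ (\sum_i rho i i * d 0 i0)).
  apply: ler_sum => i _; apply: ler_wpM2l => //.
  by have := rho_ge0 (e i); rewrite quad_delta.
by rewrite -mulr_suml [X in X * _]tr1 mul1r.
Qed.

Lemma max_expectation_spectral n (W : 'M[C]_n) (d : 'rV[C]_n) i0 :
  adjmx W *m W = 1%:M -> W *m adjmx W = 1%:M -> (forall i, d 0 i <= d 0 i0) ->
  max_expectation (W *m diag_mx d *m adjmx W) (d 0 i0).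
Proof.
move=> WW WW' d_max; rewrite -{1}[W]adjmxK.
by apply: max_expectation_adj_conj; rewrite ?adjmxK //; exact: max_expectation_diag.
Qed.

Lemma exists_argmax_ge0 n (F : 'I_n -> C) : (0 < n)%N -> (forall i, 0 <= F i) ->
  exists i0, forall i, F i <= F i0.
Proof.
case: n F => [//|n] F _ F_ge0.
have [i0 _ i0_max] := @arg_maxP _ _ _ ord0 predT (fun i => complex.Re (F i)) isT.
exists i0 => i; rewrite lecE (ger0_Im (F_ge0 i)) (ger0_Im (F_ge0 i0)) eqxx /=.
exact: i0_max.
Qed.

Lemma psd_max_expectation n (A : 'M[C]_n) : (0 < n)%N -> psd A ->
  exists2 l, 0 <= l & max_expectation A l.
Proof.
move=> n_gt0 /psd_spectral[W [d [WW WW' -> d_ge0]]].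
have [i0 i0_max] := exists_argmax_ge0 n_gt0 d_ge0.
by exists (d 0 i0); last exact: max_expectation_spectral.
Qed.

Lemma tens_diag_mx m n (d1 : 'rV[C]_m) (d2 : 'rV[C]_n) :
  diag_mx d1 *t diag_mx d2 =
  diag_mx (\row_x (d1 0 (mxtens_unindex x).1 * d2 0 (mxtens_unindex x).2)).
Proof.
apply/matrixP => x y.
case: (mxtens_indexP x) => i j; case: (mxtens_indexP y) => k l.
rewrite tensmxE !mxE mxtens_indexK (can_eq (@mxtens_indexK _ _)) xpair_eqE /=.
by case: eqP; case: eqP; rewrite /= ?mulr0n ?mulr1n ?mulr0 ?mul0r.
Qed.

Lemma tens1mx m n : (1%:M : 'M[C]_m) *t (1%:M : 'M[C]_n) = 1%:M.
Proof.
rewrite -!diag_const_mx tens_diag_mx; congr diag_mx.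
by apply/matrixP => i j; rewrite !mxE mulr1.
Qed.

Lemma max_expectation_tens m n (A : 'M[C]_m) (B : 'M[C]_n) l1 l2 :
  psd A -> psd B -> max_expectation A l1 -> max_expectation B l2 ->
  max_expectation (A *t B) (l1 * l2).
Proof.
move=> /psd_spectral[W1 [d1 [WW1 WW1' AE d1_ge0]]].
move=> /psd_spectral[W2 [d2 [WW2 WW2' BE d2_ge0]]] eA eB.
have [i1 i1_max] := exists_argmax_ge0 (max_expectation_dim_gt0 eA) d1_ge0.
have [i2 i2_max] := exists_argmax_ge0 (max_expectation_dim_gt0 eB) d2_ge0.
have -> : l1 = d1 0 i1.
  by apply: max_expectation_uniq eA _; rewrite AE; exact: max_expectation_spectral.
have -> : l2 = d2 0 i2.
  by apply: max_expectation_uniq eB _; rewrite BE; exact: max_expectation_spectral.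
rewrite AE BE -!tensmx_mul -adjmx_tens tens_diag_mx.
have -> : d1 0 i1 * d2 0 i2 =
    (\row_x (d1 0 (mxtens_unindex x).1 * d2 0 (mxtens_unindex x).2)) 0 (mxtens_index (i1, i2)).
  by rewrite mxE mxtens_indexK.
apply: max_expectation_spectral; rewrite ?adjmx_tens ?tensmx_mul ?WW1 ?WW2 ?WW1' ?WW2' ?tens1mx //.
move=> x; case: (mxtens_indexP x) => j k; rewrite !mxE !mxtens_indexK /=.
by apply: ler_pM.
Qed.

End MaxExpectation.

Section Overlap.
Variable R : realType.
Local Notation C := R[i].

Lemma sup_max (E : set R) x : E x -> ubound E x -> sup E = x.
Proof.
move=> Ex ubx; apply/le_anti/andP; split; first by apply: ge_sup => //; exists x.
by apply: ub_le_sup => //; exists x.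
Qed.

Lemma tr_mul_choi_ge0 d (N : 'M[C]_d -> 'M[C]_d) (rho : 'M[C]_(d * d)) :
  completely_positive N -> psd rho -> 0 <= \tr (rho *m choi_mx N).
Proof. by move=> cpN prho; rewrite -me_unit_overlap; exact: (cpN d rho prho).2. Qed.

Lemma choi_mx_psd d (N : 'M[C]_d -> 'M[C]_d) : completely_positive N -> psd (choi_mx N).
Proof.
move=> cpN; have quad_ge0 (v : 'cV[C]_(d * d)) : 0 <= (adjmx v *m choi_mx N *m v) 0 0.
  by rewrite quad_tr; apply: tr_mul_choi_ge0 => //; exact: psd_outer.
by split => //; exact: quad_ge0_hermitian.
Qed.

Lemma fidelity_choi d (N : 'M[C]_d -> 'M[C]_d) (rho : 'M[C]_(d * d)) :
  (0 < d)%N -> completely_positive N -> psd rho ->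
  fidelity (tens_map (@id 'M[C]_d) N rho) (phi_me R d) =
  complex.Re (sqrtC (\tr (rho *m choi_mx N))).
Proof.
move=> d_gt0 cpN prho.
by rewrite -me_unit_outer fidelity_outer ?me_unit_overlap ?me_unit_norm //; exact: cpN.
Qed.

Lemma Oval_max_expectation d (N : 'M[C]_d -> 'M[C]_d) l :
  (0 < d)%N -> completely_positive N -> max_expectation (choi_mx N) l ->
  Oval N = complex.Re (sqrtC l).
Proof.
move=> d_gt0 cpN [[rho0 [prho0 tr0] <-] le_l]; apply: sup_max.
  by exists rho0; split; [split | rewrite fidelity_choi].
move=> _ [rho [[prho tr1] ->]]; rewrite fidelity_choi //.
have: sqrtC (\tr (rho *m choi_mx N)) <= sqrtC (\tr (rho0 *m choi_mx N)).
  by rewrite ler_sqrtC ?nnegrE ?tr_mul_choi_ge0 //; exact: le_l.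
by rewrite lecE => /andP[].
Qed.

End Overlap.

Section Reindexing.
Variable R : realType.
Local Notation C := R[i].

Definition reindex_mx n m (s : 'I_n -> 'I_m) : 'M[C]_(m, n) :=
  \matrix_(a, y) (a == s y)%:R.

Lemma reindex_mx_conj n m (s : 'I_n -> 'I_m) (X : 'M[C]_m) :
  adjmx (reindex_mx s) *m X *m reindex_mx s = \matrix_(x, y) X (s x) (s y).
Proof.
apply/matrixP => x y; rewrite !mxE.
under eq_bigr => b _ do rewrite !mxE.
rewrite -[RHS](sum_nat_eq_mulr (fun b => X (s x) b)); apply: eq_bigr => b _.
rewrite mulrC; congr (_ * _).
rewrite -[RHS](sum_nat_eq_mulr (fun a => X a b)); apply: eq_bigr => a _.
by rewrite adjmxE !mxE rmorph_nat.
Qed.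

Lemma psd_reindex n m (s : 'I_n -> 'I_m) (X : 'M[C]_m) :
  psd X -> psd (\matrix_(x, y) X (s x) (s y)).
Proof. by rewrite -reindex_mx_conj; exact: psd_adj_conj. Qed.

Lemma reindex_mx_unitary n m (s : 'I_n -> 'I_m) (g : 'I_m -> 'I_n) :
  cancel s g -> cancel g s ->
  adjmx (reindex_mx s) *m reindex_mx s = 1%:M /\ reindex_mx s *m adjmx (reindex_mx s) = 1%:M.
Proof.
move=> sK gK; split; apply/matrixP => a b; rewrite !mxE.
  under eq_bigr => c _ do rewrite adjmxE !mxE rmorph_nat eq_sym.
  by rewrite sum_nat_eq_mull (inj_eq (can_inj sK)).
rewrite (reindex g) /=; last by exists s => c _.
under eq_bigr => c _ do rewrite adjmxE !mxE rmorph_nat gK.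
by rewrite sum_nat_eq_mull eq_sym.
Qed.

End Reindexing.

Definition tens_shuffle m1 m2 n1 n2 (x : 'I_((m1 * m2) * (n1 * n2))) :
    'I_((m1 * n1) * (m2 * n2)) :=
  let a := mxtens_unindex (mxtens_unindex x).1 in
  let b := mxtens_unindex (mxtens_unindex x).2 in
  mxtens_index (mxtens_index (a.1, b.1), mxtens_index (a.2, b.2)).
Arguments tens_shuffle : clear implicits.

Lemma tens_shuffleE m1 m2 n1 n2 a1 a2 b1 b2 :
  tens_shuffle m1 m2 n1 n2 (mxtens_index (mxtens_index (a1, a2), mxtens_index (b1, b2))) =
  mxtens_index (mxtens_index (a1, b1), mxtens_index (a2, b2)).
Proof. by rewrite /tens_shuffle !mxtens_indexK. Qed.

Lemma tens_shuffleK m1 m2 n1 n2 :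
  cancel (tens_shuffle m1 m2 n1 n2) (tens_shuffle m1 n1 m2 n2).
Proof.
move=> x; case: (mxtens_indexP x) => a b.
case: (mxtens_indexP a) => a1 a2; case: (mxtens_indexP b) => b1 b2.
by rewrite !tens_shuffleE.
Qed.


Section TensorChannel.
Variable R : realType.
Local Notation C := R[i].

Lemma tens_map_delta m1 n1 m2 n2 (f : 'M[C]_m1 -> 'M[C]_n1) (g : 'M[C]_m2 -> 'M[C]_n2)
  k1 k2 l1 l2 :
  tens_map f g (delta_mx (mxtens_index (k1, k2)) (mxtens_index (l1, l2))) =
  f (delta_mx k1 l1) *t g (delta_mx k2 l2).
Proof.
apply/matrixP => x y.
case: (mxtens_indexP x) => p1 p2; case: (mxtens_indexP y) => q1 q2.
rewrite tens_mapE tensmxE.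
transitivity (\sum_i ((i == k1)%:R * \sum_j ((j == l1)%:R * \sum_k ((k == k2)%:R *
   \sum_l ((l == l2)%:R * (f (delta_mx i j) p1 q1 * g (delta_mx k l) p2 q2)))))).
  apply: eq_bigr => i _; rewrite [RHS]mulr_sumr; apply: eq_bigr => j _.
  rewrite !mulr_sumr; apply: eq_bigr => k _; rewrite !mulr_sumr; apply: eq_bigr => l _.
  rewrite mxE !(can_eq (@mxtens_indexK _ _)) !xpair_eqE -!mulnb !natrM /=.
  ring.
by rewrite !sum_nat_eq_mulr.
Qed.

Lemma choi_mx_tens d1 d2 (N1 : 'M[C]_d1 -> 'M[C]_d1) (N2 : 'M[C]_d2 -> 'M[C]_d2) :
  choi_mx (tens_map N1 N2) =
  adjmx (reindex_mx R (tens_shuffle d1 d2 d1 d2)) *m (choi_mx N1 *t choi_mx N2) *m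
    reindex_mx R (tens_shuffle d1 d2 d1 d2).
Proof.
rewrite reindex_mx_conj; apply/matrixP => x y.
case: (mxtens_indexP x) => b l; case: (mxtens_indexP b) => b1 b2.
case: (mxtens_indexP l) => l1 l2; case: (mxtens_indexP y) => a k.
case: (mxtens_indexP a) => a1 a2; case: (mxtens_indexP k) => k1 k2.
rewrite mxE !tens_shuffleE tensmxE !choi_mxE tens_map_delta tensmxE natrM invfM.
by ring.
Qed.

(* [I (x) (N1 (x) N2)] is [I (x) N2], then [I (x) N1], up to regrouping the
   tensor factors between the three steps. *)
Lemma completely_positive_tens m1 m2 (N1 : 'M[C]_m1 -> 'M[C]_m1)
  (N2 : 'M[C]_m2 -> 'M[C]_m2) :
  completely_positive N1 -> completely_positive N2 -> completely_positive (tens_map N1 N2).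
Proof.
move=> cp1 cp2 k rho prho.
pose tA (x : 'I_((k * m1) * m2)) : 'I_(k * (m1 * m2)) :=
  mxtens_index ((mxtens_unindex (mxtens_unindex x).1).1,
                mxtens_index ((mxtens_unindex (mxtens_unindex x).1).2, (mxtens_unindex x).2)).
pose tB (x : 'I_((k * m2) * m1)) : 'I_((k * m1) * m2) :=
  mxtens_index (mxtens_index ((mxtens_unindex (mxtens_unindex x).1).1, (mxtens_unindex x).2),
                (mxtens_unindex (mxtens_unindex x).1).2).
pose tC (x : 'I_(k * (m1 * m2))) : 'I_((k * m2) * m1) :=
  mxtens_index (mxtens_index ((mxtens_unindex x).1, (mxtens_unindex (mxtens_unindex x).2).2),
                (mxtens_unindex (mxtens_unindex x).2).1).
pose Y := tens_map (@id 'M[C]_(k * m1)) N2 (\matrix_(x, y) rho (tA x) (tA y)).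
pose Z := tens_map (@id 'M[C]_(k * m2)) N1 (\matrix_(x, y) Y (tB x) (tB y)).
have pZ : psd Z by apply/cp1/psd_reindex/cp2/psd_reindex.
suff -> : tens_map (@id 'M[C]_k) (tens_map N1 N2) rho = \matrix_(x, y) Z (tC x) (tC y).
  exact: psd_reindex.
apply/matrixP => x y.
case: (mxtens_indexP x) => i p; case: (mxtens_indexP p) => p1 p2.
case: (mxtens_indexP y) => j q; case: (mxtens_indexP q) => q1 q2.
rewrite mxE /tC !mxtens_indexK /= /Z !tens_map_idE.
rewrite sum_mxtens_index; apply: eq_bigr => k1 _.
transitivity (\sum_k2 \sum_l1 \sum_l2
   (rho (mxtens_index (i, mxtens_index (k1, k2))) (mxtens_index (j, mxtens_index (l1, l2))) *
    (N1 (delta_mx k1 l1) p1 q1 * N2 (delta_mx k2 l2) p2 q2))).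
  apply: eq_bigr => k2 _; rewrite sum_mxtens_index; apply: eq_bigr => l1 _.
  by apply: eq_bigr => l2 _; rewrite tens_map_delta tensmxE.
rewrite exchange_big /=; apply: eq_bigr => l1 _.
rewrite mxE /tB !mxtens_indexK /= /Y tens_map_idE mulr_suml; apply: eq_bigr => k2 _.
rewrite mulr_suml; apply: eq_bigr => l2 _.
by rewrite mxE /tA !mxtens_indexK /=; ring.
Qed.

End TensorChannel.

Lemma ReM_ge0 (R : realType) (a b : R[i]) : 0 <= a -> 0 <= b ->
  complex.Re (a * b) = complex.Re a * complex.Re b.
Proof.
move=> a_ge0 b_ge0; have := ger0_Im a_ge0; have := ger0_Im b_ge0.
case: a a_ge0 => a1 a2 _; case: b b_ge0 => b1 b2 _ /= -> ->.
by rewrite !mulr0 subr0.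
Qed.

Theorem theorem2 (R : realType) (d1 d2 : nat) (hd1 : (0 < d1)%N) (hd2 : (0 < d2)%N)
  (N1 : 'M[R[i]]_d1 -> 'M[R[i]]_d1) (N2 : 'M[R[i]]_d2 -> 'M[R[i]]_d2) :
  channel N1 -> channel N2 ->
  Oval (tens_map N1 N2) = Oval N1 * Oval N2.
Proof.
move=> [_ [cp1 _]] [_ [cp2 _]].
have mul_gt0 m n : (0 < m)%N -> (0 < n)%N -> (0 < m * n)%N by rewrite muln_gt0 => -> ->.
have [l1 l1_ge0 max1] := psd_max_expectation (mul_gt0 _ _ hd1 hd1) (choi_mx_psd cp1).
have [l2 l2_ge0 max2] := psd_max_expectation (mul_gt0 _ _ hd2 hd2) (choi_mx_psd cp2).
have max12 : max_expectation (choi_mx (tens_map N1 N2)) (l1 * l2).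
  have [UU UU'] := reindex_mx_unitary R (@tens_shuffleK d1 d2 d1 d2) (@tens_shuffleK _ _ _ _).
  rewrite choi_mx_tens; apply: max_expectation_adj_conj UU UU' _.
  exact: max_expectation_tens (choi_mx_psd cp1) (choi_mx_psd cp2) max1 max2.
rewrite (Oval_max_expectation hd1 cp1 max1) (Oval_max_expectation hd2 cp2 max2).
rewrite (Oval_max_expectation (mul_gt0 _ _ hd1 hd2) (completely_positive_tens cp1 cp2) max12).
by rewrite sqrtCM ?nnegrE // ReM_ge0 ?sqrtC_ge0.
Qed.
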